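(* Fix an integer $k\ge 1$. For $m\ge k$ let $w(m)$ be the maximal weight of a seed of span at most $m$ that solves the (linear) $(m,k)$-problem. Then $m-w(m)=\Theta\!\left(m^{\frac{k}{k+1}}\right)$ as $m\to\infty$.
   Context: A seed is a finite word over $\{\#,-\}$ ($-$ is called a joker); its span is its length and its weight its number of $\#$'s. A binary word is an $(m,k)$-similarity if it has length $m$ and exactly $k$ zeros. A seed $Q$ matches a binary word $w$ at position $j$ ($1\le j\le |w|-s(Q)+1$) if $w[j+t-1]=1$ for every $t$ with $Q[t]=\#$, and detects $w$ if it matches at some position. $Q$ solves the $(m,k)$-problem if it detects every $(m,k)$-similarity. *)

From Stdlib Require Import Reals List Arith ClassicalEpsilon.
Import ListNotations.

(* A seed: true = '#', false = '-' (joker). *)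
Definition seed := list bool.
Definition span (Q : seed) : nat := length Q.
Definition weight (Q : seed) : nat := length (filter (fun b => b) Q).

(* Binary words: true = 1, false = 0. *)
Definition word := list bool.
Definition zeros (w : word) : nat := length (filter negb w).

Definition similarity (m k : nat) (w : word) : Prop :=
  length w = m /\ zeros w = k.

(* 1-indexed positions as in the paper: Q matches w at position j
   (1 <= j <= |w| - s(Q) + 1) iff w[j+t-1] = 1 for every t with Q[t] = '#'.
   List indices are 0-based, so Q[t] is nth (t-1) and w[j+t-1] is nth (j+t-2). *)
Definition matches_at (Q : seed) (w : word) (j : nat) : Prop :=
  (1 <= j)%nat /\ (j + span Q <= length w + 1)%nat /\
  forall t : nat, (1 <= t <= span Q)%nat ->
    nth (t - 1) Q false = true -> nth (j + t - 2) w false = true.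

Definition detects (Q : seed) (w : word) : Prop := exists j, matches_at Q w j.

Definition solves (Q : seed) (m k : nat) : Prop :=
  forall w : word, similarity m k w -> detects Q w.

Definition is_max_solving_weight (k m n : nat) : Prop :=
  (exists Q : seed, (span Q <= m)%nat /\ solves Q m k /\ weight Q = n) /\
  (forall Q : seed, (span Q <= m)%nat -> solves Q m k -> (weight Q <= n)%nat).

(* w(m) (for fixed k): the maximum above (it exists and is unique; chosen by epsilon). *)
Definition wmax (k m : nat) : nat :=
  epsilon (inhabits 0%nat) (is_max_solving_weight k m).

(* Let t = floor(m^(1/(k+1))).  Call x a joker
   position when x mod t^i < t^(i-1) for some 1 <= i <= k.  Any k positions can
   be moved onto jokers by a common shift d < t^k, chosen digit by digit in
   base t (joker_cover), so the seed of span m + 1 - t^k whose jokers are the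
   joker positions solves the problem; it has at most about k(m + t^k)/t
   jokers (joker_count), whence m - w(m) <= (1 + 3k) m^(k/(k+1)).

   With b = m/k, the b^k words having exactly one zero in each
   of k consecutive blocks of length b must all be detected; a fixed
   placement leaves at most e = m - weight Q positions uncovered, so it
   detects at most e^k of them, and there are at most e + 1 placements.
   Hence b^k <= (e + 1) e^k (lower_bound_nat, via the union bound
   tuple_cover_bound), which gives m^(k/(k+1)) <= 4k (m - w(m)). *)

From Stdlib Require Import Reals List Arith Lia ClassicalEpsilon Classical Lra.
Import ListNotations.
Open Scope nat_scope.
Open Scope bool_scope.

Definition cnt (p : nat -> bool) (l : list nat) : nat := length (filter p l).

Lemma cnt_cons p x l : cnt p (x :: l) = (if p x then 1 else 0) + cnt p l.
Proof. unfold cnt; simpl; destruct (p x); reflexivity. Qed.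

Lemma cnt_app p l1 l2 : cnt p (l1 ++ l2) = cnt p l1 + cnt p l2.
Proof. unfold cnt; rewrite filter_app, length_app; reflexivity. Qed.

Lemma cnt_ext p q l : (forall x, In x l -> p x = q x) -> cnt p l = cnt q l.
Proof. intros H; unfold cnt; rewrite (filter_ext_in _ _ _ H); reflexivity. Qed.

Lemma cnt_all_true p l : (forall x, In x l -> p x = true) -> cnt p l = length l.
Proof.
  induction l as [|x l IH]; intros H; [reflexivity|].
  rewrite cnt_cons, H, IH; simpl; auto.
  intros y Hy; apply H; simpl; auto.
Qed.

Lemma cnt_all_false p l : (forall x, In x l -> p x = false) -> cnt p l = 0.
Proof.
  induction l as [|x l IH]; intros H; [reflexivity|].
  rewrite cnt_cons, H, IH; simpl; auto.
  intros y Hy; apply H; simpl; auto.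
Qed.

Lemma cnt_or p q l : cnt (fun x => p x || q x) l <= cnt p l + cnt q l.
Proof.
  induction l as [|x l IH]; [reflexivity|].
  rewrite !cnt_cons. destruct (p x), (q x); simpl; lia.
Qed.

Lemma cnt_shift p n : forall len start,
  cnt p (seq (start + n) len) = cnt (fun x => p (x + n)) (seq start len).
Proof.
  induction len as [|len IH]; intros start; [reflexivity|].
  simpl seq. rewrite !cnt_cons. replace (S (start + n)) with (S start + n) by lia.
  rewrite IH. reflexivity.
Qed.

Lemma cnt_seq_app p a b c : cnt p (seq a (b + c)) = cnt p (seq a b) + cnt p (seq (a + b) c).
Proof. rewrite seq_app, cnt_app; reflexivity. Qed.

Lemma cnt_window p a b m : a + b <= m -> cnt p (seq a b) <= cnt p (seq 0 m).
Proof.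
  intros H. replace m with (a + b + (m - (a + b))) by lia.
  rewrite cnt_seq_app. pose proof (cnt_seq_app p 0 a b) as E. simpl in E. lia.
Qed.

Lemma cnt_positions (f : bool -> bool) (w : list bool) :
  cnt (fun i => f (nth i w false)) (seq 0 (length w)) = length (filter f w).
Proof.
  induction w as [|x w IH]; [reflexivity|].
  simpl length. simpl seq. rewrite cnt_cons.
  change (seq 1 (length w)) with (seq (0 + 1) (length w)). rewrite cnt_shift.
  rewrite (cnt_ext _ (fun i => f (nth i w false))) by (intros i _; rewrite Nat.add_1_r; reflexivity).
  rewrite IH. simpl. destruct (f x); reflexivity.
Qed.

Lemma sum_const {A} c (B : list A) : list_sum (map (fun _ => c) B) = length B * c.
Proof. induction B; simpl; lia. Qed.

Lemma sum_le {A} (F G : A -> nat) B : (forall x, In x B -> F x <= G x) ->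
  list_sum (map F B) <= list_sum (map G B).
Proof.
  induction B as [|x B IH]; intros H; simpl; [lia|].
  specialize (H x (or_introl eq_refl)) as Hx.
  assert (list_sum (map F B) <= list_sum (map G B)) by (apply IH; intros; apply H; right; auto).
  lia.
Qed.

Lemma sum_mul_r {A} (F : A -> nat) c B :
  list_sum (map (fun x => F x * c) B) = list_sum (map F B) * c.
Proof. induction B; simpl; lia. Qed.

Lemma double_count (R : nat -> nat -> bool) (D B : list nat) :
  list_sum (map (fun o => cnt (fun d => R d o) D) B) = list_sum (map (fun d => cnt (R d) B) D).
Proof.
  induction D as [|d D IH]; simpl.
  - induction B; simpl; auto.
  - rewrite <- IH. clear IH. induction B as [|o B IHB]; simpl; [reflexivity|].
    rewrite !cnt_cons, IHB. destruct (R d o); simpl; lia.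
Qed.

Definition hash_at (Q : seed) (d z : nat) : bool :=
  (d <=? z) && (z <? d + span Q) && nth (z - d) Q false.

Lemma hash_at_spec Q d z :
  hash_at Q d z = true <-> d <= z < d + span Q /\ nth (z - d) Q false = true.
Proof.
  unfold hash_at. rewrite !Bool.andb_true_iff, Nat.leb_le, Nat.ltb_lt. tauto.
Qed.

Lemma detects_iff Q w : detects Q w <->
  exists d, d + span Q <= length w /\
    forall z, hash_at Q d z = true -> nth z w false = true.
Proof.
  split.
  - intros [j [Hj1 [Hj2 Hj3]]]. exists (j - 1). split; [lia|].
    intros z Hz. apply hash_at_spec in Hz as [Hz HQ].
    specialize (Hj3 (z - (j - 1) + 1) ltac:(lia)).
    replace (z - (j - 1) + 1 - 1) with (z - (j - 1)) in Hj3 by lia.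
    replace (j + (z - (j - 1) + 1) - 2) with z in Hj3 by lia.
    exact (Hj3 HQ).
  - intros [d [Hd Hz]]. exists (S d). split; [lia|]. split; [lia|].
    intros t Ht HQ. replace (S d + t - 2) with (d + (t - 1)) by lia.
    apply Hz, hash_at_spec. replace (d + (t - 1) - d) with (t - 1) by lia. split; [lia|exact HQ].
Qed.

Lemma weight_le_cnt_hash_at Q d m :
  d + span Q <= m -> weight Q <= cnt (hash_at Q d) (seq 0 m).
Proof.
  intros H. eapply Nat.le_trans; [|apply (cnt_window _ d (span Q)); exact H].
  rewrite <- (Nat.add_0_l d), cnt_shift, Nat.add_0_l.
  unfold weight. rewrite <- (cnt_positions (fun b => b)).
  apply Nat.eq_le_incl, cnt_ext. intros x Hx. apply in_seq in Hx.
  unfold hash_at. replace (x + d - d) with x by lia.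
  rewrite (proj2 (Nat.leb_le d (x + d))), (proj2 (Nat.ltb_lt (x + d) (d + span Q))) by lia.
  reflexivity.
Qed.

Lemma uncovered_le Q d m :
  d + span Q <= m -> cnt (fun z => negb (hash_at Q d z)) (seq 0 m) <= m - weight Q.
Proof.
  intros H. pose proof (weight_le_cnt_hash_at Q d m H).
  pose proof (filter_length (hash_at Q d) (seq 0 m)) as E.
  rewrite length_seq in E. unfold cnt in *. lia.
Qed.

Lemma weight_le_span Q : weight Q <= span Q.
Proof. apply filter_length_le. Qed.

Lemma bounded_max (P : nat -> Prop) n0 m : P n0 -> (forall n, P n -> n <= m) ->
  exists n, P n /\ forall n', P n' -> n' <= n.
Proof.
  intros H0 Hb.
  assert (G : forall c n, P n -> m - n <= c -> exists n, P n /\ forall n', P n' -> n' <= n).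
  { induction c as [|c IH]; intros n Hn Hc.
    - exists n. split; auto. intros n' Hn'. specialize (Hb _ Hn'). lia.
    - destruct (classic (exists n', P n' /\ n < n')) as [[n' [Hn' Hlt]]|Hno].
      + apply (IH n' Hn'). specialize (Hb _ Hn'). lia.
      + exists n. split; auto. intros n' Hn'. destruct (le_lt_dec n' n); auto.
        exfalso; apply Hno; eauto. }
  exact (G m n0 H0 ltac:(lia)).
Qed.

(* The empty seed matches everywhere, so the maximum defining w(m) is over a nonempty set. *)
Lemma solves_nil m k : solves [] m k.
Proof.
  intros w _. apply detects_iff. exists 0. split; [simpl; lia|].
  intros z Hz. apply hash_at_spec in Hz. simpl in Hz. lia.
Qed.

Lemma wmax_spec k m : is_max_solving_weight k m (wmax k m).
Proof.
  unfold wmax. apply epsilon_spec.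
  destruct (bounded_max (fun n => exists Q : seed, span Q <= m /\ solves Q m k /\ weight Q = n) 0 m)
    as [n [Hn Hmax]].
  - exists []. split; [simpl; lia|]. split; [apply solves_nil|reflexivity].
  - intros n [Q [H1 [_ H3]]]. pose proof (weight_le_span Q). lia.
  - exists n. split; auto. intros Q H1 H2. apply Hmax. eauto.
Qed.

Fixpoint joker (t k x : nat) : bool :=
  match k with
  | 0 => false
  | S i => (x mod t ^ S i <? t ^ i) || joker t i x
  end.

Lemma pow_ge_1 t n : 1 <= t -> 1 <= t ^ n.
Proof. intros H. pose proof (Nat.pow_nonzero t n ltac:(lia)). lia. Qed.

Lemma joker_periodic t k : forall i x c, i <= k -> joker t i (x + c * t ^ k) = joker t i x.
Proof.
  induction i as [|i IH]; intros x c Hi; simpl; [reflexivity|].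
  rewrite IH by lia. replace (t ^ k) with (t ^ (k - S i) * t ^ S i)
    by (rewrite <- Nat.pow_add_r; f_equal; lia).
  rewrite Nat.mul_assoc, Nat.Div0.mod_add. reflexivity.
Qed.

Lemma digit_choice a t T : 1 <= t -> 1 <= T ->
  exists c, c < t /\ c * T <= a /\ (a - c * T) mod (t * T) < T.
Proof.
  intros Ht HT. set (r := a mod (t * T)). exists (r / T).
  assert (Hr : r < T * t) by (unfold r; rewrite Nat.mul_comm; apply Nat.mod_upper_bound; nia).
  pose proof (Nat.div_mod_eq a (t * T)) as Ea. fold r in Ea.
  pose proof (Nat.div_mod_eq r T) as Er.
  pose proof (Nat.mod_upper_bound r T ltac:(lia)) as Hrm.
  split; [apply Nat.Div0.div_lt_upper_bound; exact Hr|]. split; [nia|].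
  replace (a - r / T * T) with (r mod T + (a / (t * T)) * (t * T)) by nia.
  rewrite Nat.Div0.mod_add, Nat.mod_small by nia. exact Hrm.
Qed.

Lemma joker_cover t (ht : 1 <= t) : forall k (Zs : list nat), length Zs <= k ->
  exists d, d < t ^ k /\ forall z, In z Zs -> d <= z -> joker t k (z - d) = true.
Proof.
  induction k as [|k IH]; intros Zs HL.
  - exists 0. split; [simpl; lia|]. destruct Zs; simpl in *; [tauto|lia].
  - destruct Zs as [|z Zs].
    + exists 0. split; [pose proof (pow_ge_1 t (S k) ht); lia|simpl; tauto].
    + simpl in HL. destruct (IH Zs ltac:(lia)) as [d' [Hd' Hcov]].
      destruct (digit_choice (z - d') t (t ^ k) ht (pow_ge_1 t k ht)) as [c [Hc [HcT Hmod]]].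
      exists (d' + c * t ^ k). simpl (t ^ S k). split; [nia|].
      intros y [<-|Hy] Hle; simpl; apply Bool.orb_true_iff.
      * left. apply Nat.ltb_lt. replace (z - (d' + c * t ^ k)) with (z - d' - c * t ^ k) by lia.
        exact Hmod.
      * right. rewrite <- (joker_periodic t k k _ c (le_n k)).
        replace (y - (d' + c * t ^ k) + c * t ^ k) with (y - d') by lia.
        apply Hcov; auto. lia.
Qed.

Lemma residue_count p q a : q <= p -> cnt (fun x => x mod p <? q) (seq 0 (a * p)) = a * q.
Proof.
  intros Hqp. induction a as [|a IH]; [reflexivity|].
  replace (S a * p) with (a * p + p) by lia. rewrite cnt_seq_app, IH, Nat.add_0_l.
  rewrite <- (Nat.add_0_l (a * p)), cnt_shift.
  replace (seq 0 p) with (seq 0 (q + (p - q))) by (f_equal; lia). rewrite cnt_seq_app.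
  rewrite cnt_all_true, cnt_all_false, length_seq; [lia| |].
  - intros x Hx. apply in_seq in Hx.
    rewrite Nat.Div0.mod_add, Nat.mod_small by lia. apply Nat.ltb_ge; lia.
  - intros x Hx. apply in_seq in Hx.
    rewrite Nat.Div0.mod_add, Nat.mod_small by lia. apply Nat.ltb_lt; lia.
Qed.

Lemma residue_count_bound t q s : 1 <= q ->
  t * cnt (fun x => x mod (t * q) <? q) (seq 0 s) <= s + t * q.
Proof.
  intros Hq. destruct t as [|t]; [lia|]. set (p := S t * q).
  assert (Hs : s <= (s / p + 1) * p).
  { pose proof (Nat.div_mod_eq s p). pose proof (Nat.mod_upper_bound s p ltac:(nia)). nia. }
  pose proof (cnt_window (fun x => x mod p <? q) 0 s _ Hs) as H.
  rewrite residue_count in H by (unfold p; nia).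
  pose proof (Nat.Div0.mul_div_le s p). unfold p in *. nia.
Qed.

Lemma joker_count t s k : 1 <= t -> t * cnt (joker t k) (seq 0 s) <= k * (s + t ^ k).
Proof.
  intros ht. induction k as [|k IH]; simpl joker.
  - rewrite cnt_all_false by reflexivity. lia.
  - pose proof (cnt_or (fun x => x mod t ^ S k <? t ^ k) (joker t k) (seq 0 s)).
    pose proof (residue_count_bound t (t ^ k) s (pow_ge_1 t k ht)).
    assert (t ^ k <= t * t ^ k) by nia. simpl (t ^ S k) in *. nia.
Qed.

Definition joker_seed (t k s : nat) : seed := map (fun x => negb (joker t k x)) (seq 0 s).

Lemma joker_seed_span t k s : span (joker_seed t k s) = s.
Proof. unfold span, joker_seed. rewrite length_map, length_seq. reflexivity. Qed.

Lemma joker_seed_weight t k s : weight (joker_seed t k s) + cnt (joker t k) (seq 0 s) = s.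
Proof.
  assert (E : weight (joker_seed t k s) = cnt (fun x => negb (joker t k x)) (seq 0 s)).
  { unfold weight, joker_seed, cnt. induction (seq 0 s) as [|x l IH]; [reflexivity|].
    simpl. destruct (joker t k x); simpl; auto. }
  rewrite E. pose proof (filter_length (joker t k) (seq 0 s)). rewrite length_seq in *.
  unfold cnt in *. lia.
Qed.

(* The joker seed of span m + 1 - t^k solves the (m,k)-problem: the covering
   shift of the k zero positions is a valid placement. *)
Lemma joker_seed_solves t k m : 1 <= t -> t ^ k <= m ->
  solves (joker_seed t k (m + 1 - t ^ k)) m k.
Proof.
  intros Ht Htk w [Hlen Hz]. set (Q := joker_seed t k (m + 1 - t ^ k)).
  set (Zs := filter (fun i => negb (nth i w false)) (seq 0 (length w))).
  assert (HZ : length Zs = k) by (rewrite <- Hz; apply cnt_positions).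
  destruct (joker_cover t Ht k Zs ltac:(lia)) as [d [Hd Hcov]].
  apply detects_iff. exists d. unfold Q. rewrite joker_seed_span. split; [lia|].
  intros z Hhash. apply hash_at_spec in Hhash as [Hdz HQ]. rewrite joker_seed_span in Hdz.
  destruct (nth z w false) eqn:E; [reflexivity|exfalso].
  assert (HIn : In z Zs) by (apply filter_In; rewrite in_seq, E; split; [lia|reflexivity]).
  unfold joker_seed in HQ. rewrite nth_indep with (d' := negb (joker t k 0)) in HQ
    by (rewrite length_map, length_seq; lia).
  rewrite (map_nth (fun x => negb (joker t k x))), seq_nth in HQ by lia.
  rewrite Nat.add_0_l, (Hcov z HIn) in HQ by lia.
  discriminate.
Qed.

Lemma upper_bound_nat k m t : 1 <= t -> t ^ k <= m ->
  t * (m - wmax k m) <= t * t ^ k + k * (m + t ^ k).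
Proof.
  intros Ht Htk. pose proof (pow_ge_1 t k Ht). destruct (wmax_spec k m) as [_ Hmax].
  pose proof (Hmax (joker_seed t k (m + 1 - t ^ k)) ltac:(rewrite joker_seed_span; lia)
                (joker_seed_solves t k m Ht Htk)) as Hw.
  pose proof (joker_seed_weight t k (m + 1 - t ^ k)) as Ew.
  pose proof (joker_count t (m + 1 - t ^ k) k Ht) as Hc.
  nia.
Qed.

Lemma tuple_cover_bound b e : forall n (U : nat -> nat -> nat -> bool) (D : list nat),
  (forall d j, In d D -> j < n -> cnt (U j d) (seq 0 b) <= e) ->
  (forall os, length os = n -> (forall o, In o os -> o < b) ->
     exists d, In d D /\ forall j, j < n -> U j d (nth j os 0) = true) ->
  b ^ n <= length D * e ^ n.
Proof.
  induction n as [|n IH]; intros U D Hbox Hcov.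
  - destruct (Hcov [] eq_refl (fun o H => match H with end)) as [d [Hd _]].
    destruct D; [contradiction|]. simpl; lia.
  - (* Split the tuples according to their first coordinate o. *)
    assert (Hfiber : forall o, In o (seq 0 b) -> b ^ n <= cnt (fun d => U 0 d o) D * e ^ n).
    { intros o Ho. apply in_seq in Ho. apply (IH (fun j => U (S j))).
      - intros d j Hd Hj. apply filter_In in Hd. apply Hbox; [tauto|lia].
      - intros os Hl Hb.
        destruct (Hcov (o :: os)) as [d [Hd Hj]];
          [simpl; lia|intros x [<-|Hx]; auto; lia|].
        exists d. split.
        + apply filter_In. split; auto. apply (Hj 0); lia.
        + intros j Hjn. apply (Hj (S j)); lia. }
    pose proof (sum_le _ _ _ Hfiber) as Hsum.
    rewrite sum_const, length_seq, sum_mul_r, double_count in Hsum.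
    assert (Hrows : list_sum (map (fun d => cnt (U 0 d) (seq 0 b)) D) <= length D * e).
    { rewrite <- sum_const. apply sum_le. intros d Hd. apply Hbox; [exact Hd|lia]. }
    simpl. nia.
Qed.

Definition block (b o : nat) : list bool := repeat true o ++ false :: repeat true (b - 1 - o).

Fixpoint block_word (b r : nat) (os : list nat) : list bool :=
  match os with
  | [] => repeat true r
  | o :: os' => block b o ++ block_word b r os'
  end.

Lemma zeros_app (l1 l2 : list bool) : zeros (l1 ++ l2) = zeros l1 + zeros l2.
Proof. unfold zeros; rewrite filter_app, length_app; reflexivity. Qed.

Lemma zeros_repeat_true n : zeros (repeat true n) = 0.
Proof. induction n; auto. Qed.

Lemma block_length b o : o < b -> length (block b o) = b.
Proof. intros H. unfold block. rewrite length_app. simpl. rewrite !repeat_length. lia. Qed.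

Lemma block_word_length b r os : (forall o, In o os -> o < b) ->
  length (block_word b r os) = length os * b + r.
Proof.
  induction os as [|o os IH]; intros H; simpl; [apply repeat_length|].
  rewrite length_app, block_length, IH by (intros; apply H; simpl; auto). lia.
Qed.

Lemma block_word_zeros b r os : zeros (block_word b r os) = length os.
Proof.
  induction os as [|o os IH]; simpl; [apply zeros_repeat_true|].
  unfold block. rewrite !zeros_app.
  change (zeros (false :: repeat true (b - 1 - o))) with (S (zeros (repeat true (b - 1 - o)))).
  rewrite !zeros_repeat_true, IH. reflexivity.
Qed.

Lemma block_word_nth b r os j : (forall o, In o os -> o < b) -> j < length os ->
  nth (j * b + nth j os 0) (block_word b r os) false = false.
Proof.
  revert j. induction os as [|o os IH]; intros j H Hj; simpl in Hj; [lia|].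
  assert (Ho : o < b) by (apply H; simpl; auto).
  simpl block_word. destruct j as [|j].
  - rewrite app_nth1 by (rewrite block_length; simpl; lia).
    unfold block. simpl. rewrite app_nth2 by (rewrite repeat_length; lia).
    rewrite repeat_length, Nat.sub_diag. reflexivity.
  - rewrite app_nth2 by (rewrite block_length; simpl; nia).
    rewrite block_length by exact Ho.
    replace (S j * b + nth (S j) (o :: os) 0 - b) with (j * b + nth j os 0) by (simpl; lia).
    apply IH; [intros; apply H; simpl; auto|lia].
Qed.

(* Counting argument: the b^k words having one zero in each of k blocks of
   length b = m/k must all be detected, and at each of the m - span Q + 1
   placements Q detects at most (m - weight Q)^k of them. *)
Lemma lower_bound_nat k m Q : span Q <= m -> solves Q m k ->
  (m / k) ^ k <= (m - weight Q + 1) * (m - weight Q) ^ k.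
Proof.
  intros HsQ Hsol. set (b := m / k). set (e := m - weight Q).
  assert (Hkb : k * b <= m) by apply Nat.Div0.mul_div_le.
  pose proof (weight_le_span Q) as Hws.
  set (D := seq 0 (m - span Q + 1)).
  apply Nat.le_trans with (length D * e ^ k);
    [|unfold D; rewrite length_seq; apply Nat.mul_le_mono_r; unfold e; lia].
  apply (tuple_cover_bound b e k (fun j d o => negb (hash_at Q d (j * b + o)))).
  - (* At placement d, block j contains at most e uncovered positions. *)
    intros d j Hd Hj. unfold D in Hd. apply in_seq in Hd.
    apply Nat.le_trans with (cnt (fun z => negb (hash_at Q d z)) (seq (0 + j * b) b)).
    { rewrite cnt_shift. apply Nat.eq_le_incl, cnt_ext. intros o _.
      rewrite Nat.add_comm. reflexivity. }
    apply Nat.le_trans with (cnt (fun z => negb (hash_at Q d z)) (seq 0 m));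
      [apply cnt_window; nia|apply uncovered_le; lia].
  - (* A placement detecting the block word leaves all its zeros uncovered. *)
    intros os Hl Hb. set (w := block_word b (m - k * b) os).
    assert (Hsim : similarity m k w).
    { split; unfold w; [rewrite block_word_length by exact Hb; lia|rewrite block_word_zeros; exact Hl]. }
    destruct (proj1 (detects_iff Q w) (Hsol w Hsim)) as [d [Hd Hz]].
    assert (Hlw : length w = m) by (destruct Hsim; auto).
    exists d. split; [unfold D; apply in_seq; lia|].
    intros j Hj. apply Bool.negb_true_iff.
    destruct (hash_at Q d (j * b + nth j os 0)) eqn:Eh; [|reflexivity].
    apply Hz in Eh. unfold w in Eh. rewrite block_word_nth in Eh by (auto; lia). discriminate.
Qed.

Lemma nat_root_exists k m : exists t, t ^ (k + 1) <= m < (t + 1) ^ (k + 1).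
Proof.
  induction m as [|m [t [H1 H2]]].
  - exists 0. rewrite Nat.pow_0_l, Nat.add_0_l, Nat.pow_1_l by lia. lia.
  - destruct (Nat.eq_dec (S m) ((t + 1) ^ (k + 1))) as [E|E].
    + exists (t + 1). split; [lia|]. rewrite E. apply Nat.pow_lt_mono_l; lia.
    + exists t. lia.
Qed.

Lemma wmax_le_m k m : wmax k m <= m.
Proof.
  destruct (wmax_spec k m) as [[Q [Hs [_ Hw]]] _].
  pose proof (weight_le_span Q). lia.
Qed.

Lemma lower_bound_power k m e : 1 <= k -> 2 * k <= m ->
  (m / k) ^ k <= (e + 1) * e ^ k -> m ^ k <= (4 * k * e) ^ (k + 1).
Proof.
  intros Hk Hm H. set (b := m / k) in *.
  assert (Hmb : m <= 2 * k * b).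
  { pose proof (Nat.div_mod_eq m k). pose proof (Nat.mod_upper_bound m k ltac:(lia)).
    assert (1 <= b) by (apply Nat.div_le_lower_bound; lia). nia. }
  assert (He : 1 <= e).
  { destruct e; [|lia]. rewrite Nat.pow_0_l in H by lia.
    assert (1 <= b) by (apply Nat.div_le_lower_bound; lia).
    pose proof (Nat.pow_le_mono_l 1 b k ltac:(lia)). rewrite Nat.pow_1_l in *. lia. }
  apply Nat.le_trans with ((2 * k) ^ k * b ^ k).
  { rewrite <- Nat.pow_mul_l. apply Nat.pow_le_mono_l. lia. }
  replace (4 * k * e) with (2 * k * (2 * e)) by lia. rewrite (Nat.pow_mul_l (2 * k)).
  apply Nat.mul_le_mono.
  - apply Nat.pow_le_mono_r; lia.
  - eapply Nat.le_trans; [exact H|]. rewrite (Nat.add_1_r k), Nat.pow_succ_r'.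
    apply Nat.mul_le_mono; [lia|apply Nat.pow_le_mono_l; lia].
Qed.

Open Scope R_scope.

Lemma pow_lt_compat (a b : R) (n : nat) : 0 <= b -> b < a -> b ^ S n < a ^ S n.
Proof.
  intros Hb Hba. simpl.
  assert (b ^ n <= a ^ n) by (apply pow_incr; lra).
  assert (0 < a ^ n) by (apply pow_lt; lra).
  nra.
Qed.

Lemma pow_le_reg (a b : R) (n : nat) : 0 <= b -> (1 <= n)%nat -> a ^ n <= b ^ n -> a <= b.
Proof.
  intros Hb Hn H. destruct (Rle_lt_dec a b) as [|Hba]; [assumption|].
  destruct n as [|n]; [lia|]. pose proof (pow_lt_compat a b n Hb Hba). lra.
Qed.

Lemma root_of_nat (m k : nat) : (0 < m)%nat ->
  exists y, 0 < y /\ y ^ (k + 1) = INR m /\ Rpower (INR m) (INR k / INR (k + 1)) = y ^ k.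
Proof.
  intros Hm. assert (HmR : 0 < INR m) by (apply lt_0_INR; exact Hm).
  assert (Hk1 : INR (k + 1) <> 0) by (apply not_0_INR; lia).
  exists (Rpower (INR m) (/ INR (k + 1))). split; [apply exp_pos|].
  split; rewrite <- Rpower_pow, Rpower_mult by apply exp_pos.
  - rewrite Rinv_l by exact Hk1. apply Rpower_1, HmR.
  - f_equal. unfold Rdiv. ring.
Qed.

Lemma wmax_lower_bound k m y : (1 <= k)%nat -> (2 * k <= m)%nat -> 0 < y -> y ^ (k + 1) = INR m ->
  y ^ k <= 4 * INR k * (INR m - INR (wmax k m)).
Proof.
  intros Hk Hm Hy Hym. destruct (wmax_spec k m) as [[Q [Hs [Hsol Hw]]] _].
  pose proof (lower_bound_nat k m Q Hs Hsol) as Hcount. rewrite Hw in Hcount.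
  pose proof (lower_bound_power k m (m - wmax k m) Hk Hm Hcount) as Hpow.
  apply le_INR in Hpow. rewrite !pow_INR, !mult_INR in Hpow.
  rewrite <- minus_INR by apply wmax_le_m.
  apply (pow_le_reg _ _ (k + 1));
    [pose proof (pos_INR k); pose proof (pos_INR (m - wmax k m)); nra|lia|].
  replace (INR 4) with 4 in Hpow by (simpl; lra).
  rewrite <- pow_mult, Nat.mul_comm, pow_mult, Hym. exact Hpow.
Qed.

Lemma upper_bound_real (k : nat) (T y E : R) : 1 <= T -> T <= y <= 2 * T ->
  T * E <= T * T ^ k + INR k * (y ^ (k + 1) + T ^ k) -> E <= (1 + 3 * INR k) * y ^ k.
Proof.
  intros HT Hy H. set (Y := y ^ k) in *.
  assert (HK : 0 <= INR k) by apply pos_INR.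
  assert (HTY : T ^ k <= Y) by (apply pow_incr; lra).
  assert (HTk : 0 <= T ^ k) by (apply pow_le; lra).
  assert (Hym : y ^ (k + 1) <= 2 * T * Y)
    by (rewrite Nat.add_1_r; simpl; unfold Y; apply Rmult_le_compat_r; [apply pow_le|]; lra).
  assert (HTkY : T ^ k <= T * Y) by (assert (0 <= (T - 1) * Y) by (apply Rmult_le_pos; lra); lra).
  assert (INR k * (y ^ (k + 1) + T ^ k) <= INR k * (3 * T * Y)) by (apply Rmult_le_compat_l; lra).
  assert (T * T ^ k <= T * Y) by (apply Rmult_le_compat_l; lra).
  apply Rmult_le_reg_l with T; lra.
Qed.

Lemma wmax_upper_bound k m y : (1 <= m)%nat -> 0 < y -> y ^ (k + 1) = INR m ->
  INR m - INR (wmax k m) <= (1 + 3 * INR k) * y ^ k.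
Proof.
  intros Hm Hy Hym. destruct (nat_root_exists k m) as [t [Ht1 Ht2]].
  assert (Ht : (1 <= t)%nat) by (destruct t; [rewrite Nat.pow_1_l in Ht2; lia|lia]).
  assert (Htk : (t ^ k <= m)%nat)
    by (pose proof (Nat.pow_le_mono_r t k (k + 1) ltac:(lia) ltac:(lia)); lia).
  pose proof (upper_bound_nat k m t Ht Htk) as HU.
  rewrite <- minus_INR by apply wmax_le_m.
  apply (upper_bound_real k (INR t) y); [apply (le_INR 1); exact Ht| |].
  - apply le_INR in Ht1. apply lt_INR in Ht2. apply (le_INR 1) in Ht.
    rewrite pow_INR in Ht1. rewrite pow_INR, plus_INR in Ht2. simpl INR in *.
    split; [apply (pow_le_reg _ _ (k + 1)); lra || lia|].
    destruct (Rle_lt_dec y (INR t + 1)) as [Hl|Hl]; [lra|].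
    rewrite Nat.add_1_r in Ht2, Hym. pose proof (pow_lt_compat y (INR t + 1) k ltac:(lra) Hl). lra.
  - apply le_INR in HU. rewrite !plus_INR, !mult_INR, !plus_INR, !pow_INR in HU.
    rewrite Hym. exact HU.
Qed.


Theorem mainTheorem8 (k : nat) (hk : (1 <= k)%nat) :
  exists c1 c2 : R, exists M : nat, 0 < c1 /\ 0 < c2 /\
    forall m : nat, (k <= m)%nat -> (M <= m)%nat ->
      c1 * Rpower (INR m) (INR k / INR (k + 1))
        <= INR m - INR (wmax k m)
        <= c2 * Rpower (INR m) (INR k / INR (k + 1)).
Proof.
  assert (HK : 1 <= INR k) by (apply (le_INR 1); exact hk).
  exists (1 / (4 * INR k)), (1 + 3 * INR k), (2 * k)%nat.
  split; [apply Rdiv_lt_0_compat; lra|]. split; [lra|].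
  intros m _ Hm.
  destruct (root_of_nat m k) as [y [Hy [Hym ->]]]; [lia|].
  pose proof (wmax_lower_bound k m y hk Hm Hy Hym) as Hlow.
  pose proof (wmax_upper_bound k m y ltac:(lia) Hy Hym) as Hup.
  split; [|exact Hup].
  unfold Rdiv. rewrite Rmult_1_l.
  apply (Rmult_le_reg_l (4 * INR k)); [lra|].
  rewrite <- Rmult_assoc, Rinv_r, Rmult_1_l by lra. exact Hlow.
Qed.
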